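(* Let $\mathcal C$ be a finite set (a codebook) and let $P(\cdot\mid\cdot)$ be the transition kernel of an ergodic (irreducible and aperiodic) Markov chain on $\mathcal C$ with stationary distribution $\pi$. For each $m\in\mathbb N$ let $\boldsymbol X=\{X_{ij}\}_{1\le i,j\le m}$ be a random $m\times m$ array with entries in $\mathcal C$ generated according to either of the following two scenarios: (Scenario 1) the $m$ columns $(X_{1j},X_{2j},\dots,X_{mj})$, $j=1,\dots,m$, are mutually independent, and each is a Markov chain read from top to bottom with initial distribution $\pi$ and transition kernel $P$; (Scenario 2) the $m$ rows $(X_{i1},X_{i2},\dots,X_{im})$, $i=1,\dots,m$, are mutually independent, and each is a Markov chain read from left to right with initial distribution $\pi$ and transition kernel $P$. Let $\operatorname{flat}(\boldsymbol X)=(X_{11},\dots,X_{1m},X_{21},\dots,X_{2m},\dots,X_{m1},\dots,X_{mm})$ be the row-major flattening, and for a probability model $Q$ on finite sequences over $\mathcal C$ set $\mathcal L_m(Q)=-\frac{1}{m^2}\mathbb E[\log Q(\operatorname{flat}(\boldsymbol X))]$. Then $$\liminf_{m\to\infty}\ \min_{Q\in\mathcal Q_{\text{1-gram}}}\mathcal L_m(Q)\ \ge\ H(\pi)=-\sum_{a\in\mathcal C}\pi(a)\log\pi(a),$$ while, with the minimum taken over all probability distributions $Q$ on finite sequences over $\mathcal C$, $$\lim_{m\to\infty}\ \min_{Q}\mathcal L_m(Q)\ =\ H_\infty:=-\sum_{a\in\mathcal C}\sum_{a'\in\mathcal C}\pi(a)P(a'\mid a)\log P(a'\mid a).$$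
   Context: A unigram model $Q\in\mathcal Q_{\text{1-gram}}$ over a token set $\mathcal T$ is specified by a probability distribution $Q_\#$ on $\mathbb N$ and a probability distribution $Q_{\text{tok}}$ on $\mathcal T$, and assigns to a finite token sequence $\mathbf t=(t_1,\dots,t_{|\mathbf t|})$ the probability $Q(\mathbf t)=Q_\#(|\mathbf t|)\prod_{r=1}^{|\mathbf t|}Q_{\text{tok}}(t_r)$. Here the tokens are the elements of $\mathcal C$. Logarithms are natural; $H(p)=-\sum_{y\in\operatorname{supp}(p)}p(y)\log p(y)$ is the Shannon entropy. *)

From HB Require Import structures.
From mathcomp Require Import all_boot all_order all_algebra.
From mathcomp Require Import all_classical all_reals all_analysis.
Set Implicit Arguments. Unset Strict Implicit. Unset Printing Implicit Defensive.
Import Order.TTheory GRing.Theory Num.Theory.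
Local Open Scope ring_scope.
Local Open Scope classical_set_scope.

Section Defs.
Variables (R : realType) (T : finType).

Definition is_pmf (p : T -> R) : Prop :=
  (forall a, 0 <= p a) /\ \sum_(a : T) p a = 1.

Definition is_pmf_count (I : choiceType) (p : I -> R) : Prop :=
  (forall i, 0 <= p i) /\ esum [set: I] (fun i => (p i)%:E) = 1%E.

(** Transition kernel: P a b = P(b | a). *)
Definition is_kernel (P : T -> T -> R) : Prop :=
  (forall a b, 0 <= P a b) /\ (forall a, \sum_(b : T) P a b = 1).

Fixpoint nstep (P : T -> T -> R) (n : nat) (a b : T) : R :=
  match n with
  | 0 => if a == b then 1 else 0
  | k.+1 => \sum_(c : T) nstep P k a c * P c b
  end.

Definition irreducible (P : T -> T -> R) : Prop :=
  forall a b, exists n, 0 < nstep P n a b.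

(** Period of every state is 1: the only common divisor of all return
    times {n >= 1 | P^n(a,a) > 0} is 1 (i.e. their gcd is 1). *)
Definition aperiodic (P : T -> T -> R) : Prop :=
  forall a (d : nat),
    (forall n, (0 < n)%N -> 0 < nstep P n a a -> (d %| n)%N) -> d = 1%N.

Definition ergodic (P : T -> T -> R) : Prop :=
  is_kernel P /\ irreducible P /\ aperiodic P.

Definition stationary (P : T -> T -> R) (pi : T -> R) : Prop :=
  is_pmf pi /\ forall b, \sum_(a : T) pi a * P a b = pi b.

Definition mc_prob (pi : T -> R) (P : T -> T -> R) (s : seq T) : R :=
  if s is a :: t then
    pi a * \prod_(k < size t) P (nth a s k) (nth a s k.+1)
  else 1.

Definition col_seq m (x : 'M[T]_m) (j : 'I_m) : seq T :=
  [seq x i j | i <- enum 'I_m].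
Definition row_seq m (x : 'M[T]_m) (i : 'I_m) : seq T :=
  [seq x i j | j <- enum 'I_m].

Definition law_cols (pi : T -> R) (P : T -> T -> R) m (x : 'M[T]_m) : R :=
  \prod_(j < m) mc_prob pi P (col_seq x j).
Definition law_rows (pi : T -> R) (P : T -> T -> R) m (x : 'M[T]_m) : R :=
  \prod_(i < m) mc_prob pi P (row_seq x i).

Definition flat m (x : 'M[T]_m) : seq T :=
  [seq x i j | i <- enum 'I_m, j <- enum 'I_m].

Definition neglog (q : R) : \bar R :=
  if 0 < q then (- ln q)%:E else +oo%E.

(** L_m(Q) = -(1/m^2) E[log Q(flat X)], X with law [law]
    (expectation over the support of the law). *)
Definition loss (law : forall m, 'M[T]_m -> R) m (Q : seq T -> R) : \bar R :=
  (((m ^ 2)%N)%:R^-1)%:E *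
    (\sum_(x : 'M[T]_m | (0 < law m x)%R) (law m x)%:E * neglog (Q (flat x)))%E.

Definition seq_model (Q : seq T -> R) : Prop := is_pmf_count Q.

(** Unigram model with length law Qn and token law Qt. *)
Definition unigram (Qn : nat -> R) (Qt : T -> R) (t : seq T) : R :=
  Qn (size t) * \prod_(r <- t) Qt r.

Definition unigram_class : set (seq T -> R) :=
  [set Q | exists Qn Qt, [/\ is_pmf_count Qn, is_pmf Qt & Q = unigram Qn Qt]].

Definition min_loss (law : forall m, 'M[T]_m -> R) (C : set (seq T -> R)) m
  : \bar R := ereal_inf [set loss law m Q | Q in C].

Definition entropy (p : T -> R) : R :=
  - \sum_(a : T | 0 < p a) p a * ln (p a).
Definition entropy_rate (pi : T -> R) (P : T -> T -> R) : R :=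
  - \sum_(a : T) \sum_(b : T | 0 < P a b) pi a * P a b * ln (P a b).

End Defs.

(* In both scenarios the array consists of m independent stationary Markov
   chains of length m, so every entry is pi-distributed and the array law has
   entropy m (H(pi) + (m - 1) H_oo).  A unigram model pays at least
   -log Q_tok(t) per token t, and since each token is pi-distributed, Gibbs'
   inequality bounds the expected cost per token below by H(pi).  Over all
   models, Gibbs' inequality shows that the law of flat(X) itself is optimal,
   so the optimal loss is the normalized array entropy
   (H(pi) + (m - 1) H_oo) / m = H_oo + (H(pi) - H_oo) / m, which tends to H_oo. *)

From HB Require Import structures.
From mathcomp Require Import all_boot all_order all_algebra.
From mathcomp Require Import all_classical all_reals all_analysis.
From mathcomp Require Import ring lra.
Set Implicit Arguments. Unset Strict Implicit. Unset Printing Implicit Defensive.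
Import Order.TTheory GRing.Theory Num.Theory numFieldNormedType.Exports.
Local Open Scope ring_scope.
Local Open Scope classical_set_scope.

Section TupleSums.
Variables (T : finType) (V : nmodType).

Lemma sum_tuple0 (F : seq T -> V) : \sum_(t : 0.-tuple T) F t = F [::].
Proof. by rewrite (big_pred1 [tuple]) // => t; apply/esym/eqP/tuple0. Qed.

Lemma sum_tuple_cons n (F : seq T -> V) :
  \sum_(t : n.+1.-tuple T) F t = \sum_b \sum_(t : n.-tuple T) F (b :: t).
Proof.
rewrite pair_big /= (reindex (fun p : T * n.-tuple T => [tuple of p.1 :: p.2])) //=.
exists (fun t : n.+1.-tuple T => (thead t, [tuple of behead t])).
  by move=> [b t] _ /=; congr pair; apply: val_inj.
by move=> t _; apply: val_inj => /=; case: t => [[|b s] //=].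
Qed.

End TupleSums.

Lemma sum_prod_col_seq (R : comPzSemiRingType) (T : finType) m
    (g : 'I_m -> seq T -> R) :
  \sum_(x : 'M[T]_m) \prod_j g j (col_seq x j) =
  \prod_j \sum_(t : m.-tuple T) g j t.
Proof.
rewrite bigA_distr_bigA /=.
rewrite (reindex (fun f : {ffun 'I_m -> m.-tuple T} => \matrix_(i, j) tnth (f j) i)) /=.
  apply: eq_bigr => f _; apply: eq_bigr => j _; congr (g j _).
  rewrite /col_seq -[in RHS](map_tnth_enum (f j)); apply: eq_map => i.
  by rewrite mxE.
exists (fun x : 'M[T]_m => [ffun j => [tuple x i j | i < m]]).
  move=> f _; apply/ffunP => j; rewrite ffunE; apply: eq_from_tnth => i.
  by rewrite tnth_mktuple mxE.
by move=> x _; apply/matrixP => i j; rewrite mxE ffunE tnth_mktuple.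
Qed.

Section Logarithms.
Variable R : realType.

Lemma ln_prod (I : Type) (r : seq I) (q : I -> R) : (forall j, 0 < q j) ->
  ln (\prod_(j <- r) q j) = \sum_(j <- r) ln (q j).
Proof.
move=> q0.
suff: 0 < \prod_(j <- r) q j /\ ln (\prod_(j <- r) q j) = \sum_(j <- r) ln (q j)
  by case.
apply: (big_rec2 (fun x y => 0 < x /\ ln x = y)); first by rewrite ln1.
move=> j y1 y2 _ [y0 <-]; split; first by rewrite mulr_gt0.
by rewrite lnM // posrE.
Qed.

Lemma xlnxM (u v : R) : 0 <= u -> 0 <= v ->
  (u * v) * ln (u * v) = (u * v) * (ln u + ln v).
Proof.
rewrite !le0r => /orP[/eqP->|u0]; first by rewrite !mul0r.
move=> /orP[/eqP->|v0]; first by rewrite !mulr0 !mul0r.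
by rewrite lnM // posrE.
Qed.

(* Also valid when some factor vanishes, as [ln 0 = 0]. *)
Lemma xlnx_prod (I : finType) (q : I -> R) : (forall j, 0 <= q j) ->
  (\prod_j q j) * ln (\prod_j q j) =
  \sum_l \prod_j (if j == l then q j * ln (q j) else q j).
Proof.
move=> q0; case: (boolP [forall j, 0 < q j]) => [/forallP qp|].
  rewrite ln_prod // big_distrr /=; apply: eq_bigr => l _.
  rewrite (bigD1 l) //= [in RHS](bigD1 l) //= eqxx.
  rewrite [in RHS](eq_bigr q); last by move=> j /negbTE ->.
  ring.
move=> /forallPn [k]; rewrite -leNgt => qk.
have qk0 : q k = 0 by apply/eqP; rewrite eq_le qk q0.
rewrite (bigD1 k) //= qk0 !mul0r; apply/esym/big1 => l _.
by rewrite (bigD1 k) //=; case: ifP => _; rewrite qk0 ?mul0r.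
Qed.

Lemma sum_support (I : finType) (p f : I -> R) : (forall x, 0 <= p x) ->
  \sum_(x | 0 < p x) p x * f x = \sum_x p x * f x.
Proof.
move=> p0; rewrite big_mkcond /=; apply: eq_bigr => x _.
case: ifP => // /negbT; rewrite -leNgt => px.
have -> : p x = 0 by apply/eqP; rewrite eq_le px p0.
by rewrite mul0r.
Qed.

Lemma sum_support1 (I : finType) (p : I -> R) : (forall x, 0 <= p x) ->
  \sum_(x | 0 < p x) p x = \sum_x p x.
Proof.
move=> p0; under eq_bigr do rewrite -[p _]mulr1.
by rewrite sum_support //; under eq_bigr do rewrite mulr1.
Qed.

Lemma entropyE (T : finType) (p : T -> R) : (forall a, 0 <= p a) ->
  entropy p = - \sum_a p a * ln (p a).
Proof. by move=> p0; rewrite /entropy (sum_support (fun a => ln (p a)) p0). Qed.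

Lemma ln_le_subr1 (u : R) : 0 < u -> ln u <= u - 1.
Proof.
by move=> u0; have := @le_ln1Dx R (u - 1); rewrite addrCA subrr addr0; apply; lra.
Qed.

Lemma xlnx_sub_le (p q : R) : 0 < p -> 0 < q ->
  p - q <= p * - ln q + p * ln p.
Proof.
move=> p0 q0; have := ln_le_subr1 (divr_gt0 q0 p0).
rewrite ln_div ?posrE // => /(ler_wpM2l (ltW p0)).
have -> : p * (q / p - 1) = q - p by field; rewrite gt_eqF.
lra.
Qed.

Lemma gibbs (I : finType) (p q : I -> R) : (forall x, 0 <= p x) ->
  \sum_x p x = 1 -> \sum_(x | 0 < p x) q x <= 1 ->
  (forall x, 0 < p x -> 0 < q x) ->
  - \sum_x p x * ln (p x) <= \sum_x p x * - ln (q x).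
Proof.
move=> p0 p1 q1 pq.
rewrite -!(sum_support _ p0) -subr_ge0 opprK -big_split /=.
apply: le_trans (_ : \sum_(x | 0 < p x) (p x - q x) <= _).
  by rewrite big_split /= sumrN subr_ge0 (le_trans q1) // -p1 sum_support1.
by apply: ler_sum => x px; apply: xlnx_sub_le => //; apply: pq.
Qed.

End Logarithms.

Section StationaryChain.
Variables (R : realType) (T : finType) (P : T -> T -> R) (pi : T -> R).
Hypotheses (hP : is_kernel P) (hpi : stationary P pi).

(* Probability that the chain, started at [a], visits [t] next. *)
Definition cond_path_prob (a : T) (t : seq T) : R :=
  \prod_(k < size t) P (nth a (a :: t) k) (nth a (a :: t) k.+1).

Lemma mc_prob_cons a t : mc_prob pi P (a :: t) = pi a * cond_path_prob a t.
Proof. by []. Qed.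

Lemma cond_path_prob_cons a b t :
  cond_path_prob a (b :: t) = P a b * cond_path_prob b t.
Proof.
rewrite /cond_path_prob /= big_ord_recl /=; congr (_ * _).
apply: eq_bigr => k _; rewrite /bump /= !add0n.
by rewrite !(set_nth_default b a) // ltnS ltnW.
Qed.

Lemma cond_path_prob_ge0 a t : 0 <= cond_path_prob a t.
Proof. by apply: prodr_ge0 => k _; apply: hP.1. Qed.

Lemma mc_prob_ge0 s : 0 <= mc_prob pi P s.
Proof. by case: s => [|a t] //=; rewrite mulr_ge0 ?hpi.1.1 ?cond_path_prob_ge0. Qed.

Lemma sum_cond_path_prob n a : \sum_(t : n.-tuple T) cond_path_prob a t = 1.
Proof.
elim: n a => [|n IH] a; first by rewrite sum_tuple0 /cond_path_prob big_ord0.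
rewrite sum_tuple_cons -[RHS](hP.2 a); apply: eq_bigr => b _.
by under eq_bigr do rewrite cond_path_prob_cons; rewrite -big_distrr /= IH mulr1.
Qed.

Lemma sum_stationary (f : T -> R) :
  \sum_a pi a * \sum_b P a b * f b = \sum_b pi b * f b.
Proof.
under eq_bigr do rewrite big_distrr /=.
rewrite exchange_big /=; apply: eq_bigr => b _.
by under eq_bigr do rewrite mulrA; rewrite -big_distrl /= hpi.2.
Qed.

Lemma cond_path_marginal n i (f : T -> R) a0 : (i <= n)%N ->
  \sum_a pi a * \sum_(t : n.-tuple T) cond_path_prob a t * f (nth a0 (a :: t) i)
  = \sum_a pi a * f a.
Proof.
elim: n i => [|n IH] [|i] //= hi.
- by apply: eq_bigr => a _; rewrite -big_distrl /= sum_cond_path_prob mul1r.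
- by apply: eq_bigr => a _; rewrite -big_distrl /= sum_cond_path_prob mul1r.
rewrite -(IH i hi) -sum_stationary; apply: eq_bigr => a _; congr (_ * _).
rewrite (sum_tuple_cons _ (fun s => cond_path_prob a s * f (nth a0 (a :: s) i.+1))) /=.
apply: eq_bigr => b _; rewrite big_distrr /=; apply: eq_bigr => t _.
by rewrite cond_path_prob_cons mulrA.
Qed.

Lemma entropy_rateE :
  entropy_rate pi P = - \sum_a pi a * \sum_b P a b * ln (P a b).
Proof.
congr (- _); apply: eq_bigr => a _; under eq_bigr do rewrite -mulrA.
by rewrite -big_distrr (sum_support (fun b => ln (P a b)) (hP.1 a)).
Qed.

Lemma sum_cond_path_xlnx n :
  \sum_a pi a * \sum_(t : n.-tuple T) cond_path_prob a t * ln (cond_path_prob a t)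
  = - (n%:R * entropy_rate pi P).
Proof.
rewrite entropy_rateE mulrN opprK.
elim: n => [|n IH].
  rewrite mul0r; apply: big1 => a _.
  rewrite (sum_tuple0 (fun s => cond_path_prob a s * ln (cond_path_prob a s))).
  by rewrite /cond_path_prob big_ord0 ln1 !mulr0.
have step a : \sum_(t : n.+1.-tuple T) cond_path_prob a t * ln (cond_path_prob a t) =
    \sum_b P a b * ln (P a b) +
    \sum_b P a b * \sum_(t : n.-tuple T) cond_path_prob b t * ln (cond_path_prob b t).
  rewrite (sum_tuple_cons _ (fun s => cond_path_prob a s * ln (cond_path_prob a s))).
  rewrite -big_split /=.
  apply: eq_bigr => b _.
  under eq_bigr do rewrite cond_path_prob_cons xlnxM ?cond_path_prob_ge0 ?hP.1 // mulrDr.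
  rewrite big_split /= big_distrr /=; congr (_ + _).
    rewrite -[RHS]mulr1 -[in RHS](sum_cond_path_prob n b) big_distrr /=.
    by apply: eq_bigr => t _; ring.
  by apply: eq_bigr => t _; rewrite mulrA.
under eq_bigr do rewrite step mulrDr.
by rewrite big_split /= sum_stationary IH mulrSr mulrDl mul1r addrC.
Qed.

Lemma sum_mc_prob n : \sum_(t : n.+1.-tuple T) mc_prob pi P t = 1.
Proof.
rewrite sum_tuple_cons -hpi.1.2; apply: eq_bigr => a _.
by rewrite -[RHS]mulr1 -[in RHS](sum_cond_path_prob n a) big_distrr.
Qed.

Lemma mc_prob_marginal n i (f : T -> R) a0 : (i <= n)%N ->
  \sum_(t : n.+1.-tuple T) mc_prob pi P t * f (nth a0 t i) = \sum_a pi a * f a.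
Proof.
move=> hi; rewrite (sum_tuple_cons _ (fun s => mc_prob pi P s * f (nth a0 s i))).
rewrite -(cond_path_marginal f a0 hi); apply: eq_bigr => a _.
by rewrite big_distrr /=; apply: eq_bigr => t _; rewrite mulrA.
Qed.

Lemma sum_mc_prob_xlnx n :
  \sum_(t : n.+1.-tuple T) mc_prob pi P t * ln (mc_prob pi P t)
  = - (entropy pi + n%:R * entropy_rate pi P).
Proof.
rewrite (sum_tuple_cons _ (fun s => mc_prob pi P s * ln (mc_prob pi P s))).
rewrite opprD (entropyE hpi.1.1) opprK -sum_cond_path_xlnx -big_split.
apply: eq_bigr => a _.
under eq_bigr do rewrite mc_prob_cons xlnxM ?cond_path_prob_ge0 ?hpi.1.1 // mulrDr.
rewrite big_split /= big_distrr /=; congr (_ + _).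
  rewrite -[RHS]mulr1 -[in RHS](sum_cond_path_prob n a) big_distrr /=.
  by apply: eq_bigr => t _; ring.
by apply: eq_bigr => t _; rewrite mulrA.
Qed.

End StationaryChain.

Section ArrayLaws.
Variables (R : realType) (T : finType) (P : T -> T -> R) (pi : T -> R).
Hypotheses (hP : is_kernel P) (hpi : stationary P pi).

Lemma law_cols_ge0 m (x : 'M[T]_m) : 0 <= law_cols pi P x.
Proof. by apply: prodr_ge0 => j _; apply: mc_prob_ge0. Qed.

Lemma sum_law_cols n : \sum_(x : 'M[T]_n.+1) law_cols pi P x = 1.
Proof.
rewrite /law_cols (sum_prod_col_seq (fun _ => mc_prob pi P)).
by apply: big1 => j _; apply: sum_mc_prob.
Qed.

Lemma sum_law_cols_xlnx n :
  \sum_(x : 'M[T]_n.+1) law_cols pi P x * ln (law_cols pi P x)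
  = - (n.+1%:R * (entropy pi + n%:R * entropy_rate pi P)).
Proof.
rewrite /law_cols.
under eq_bigr => x _ do rewrite (xlnx_prod (fun j => mc_prob_ge0 hP hpi (col_seq x j))).
rewrite exchange_big /= -mulrN -[X in X%:R]card_ord -sum1_card natr_sum big_distrl /=.
apply: eq_bigr => l _; rewrite mul1r.
rewrite (sum_prod_col_seq (fun j s => if j == l then mc_prob pi P s * ln (mc_prob pi P s)
                                      else mc_prob pi P s)).
rewrite (bigD1 l) //= eqxx sum_mc_prob_xlnx // big1 ?mulr1 // => j /negbTE ->.
exact: sum_mc_prob.
Qed.

Lemma law_cols_marginal n (i j : 'I_n.+1) (f : T -> R) :
  \sum_(x : 'M[T]_n.+1) law_cols pi P x * f (x i j) = \sum_a pi a * f a.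
Proof.
case: (pickP (@predT T)) => [a0 _|T0]; last first.
  by rewrite !big1 // => [a|x] _; [have := T0 a | have := T0 (x i j)].
pose g k s := if k == j then mc_prob pi P s * f (nth a0 s i) else mc_prob pi P s.
transitivity (\sum_(x : 'M[T]_n.+1) \prod_k g k (col_seq x k)).
  apply: eq_bigr => x _; rewrite /law_cols (bigD1 j) //= [in RHS](bigD1 j) //=.
  rewrite /g eqxx [in RHS](eq_bigr (fun k => mc_prob pi P (col_seq x k))); last first.
    by move=> k /negbTE ->.
  by rewrite /col_seq (nth_map i) ?size_enum_ord // nth_ord_enum mulrAC.
rewrite (sum_prod_col_seq g) (bigD1 j) //= [X in _ * X]big1 ?mulr1; last first.
  by move=> k /negbTE kj; rewrite /g kj sum_mc_prob.
by rewrite /g eqxx mc_prob_marginal // -ltnS.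
Qed.

Lemma law_rowsE m (x : 'M[T]_m) : law_rows pi P x = law_cols pi P x^T.
Proof. by apply: eq_bigr => i _; congr mc_prob; apply: eq_map => j; rewrite mxE. Qed.

Definition stationary_chain_array (law : forall m, 'M[T]_m -> R) : Prop :=
  forall n, [/\ forall x : 'M[T]_n.+1, 0 <= law n.+1 x,
    \sum_x law n.+1 x = 1,
    \sum_x law n.+1 x * ln (law n.+1 x) =
      - (n.+1%:R * (entropy pi + n%:R * entropy_rate pi P)) &
    forall i j (f : T -> R), \sum_x law n.+1 x * f (x i j) = \sum_a pi a * f a].

Lemma law_cols_chain_array : stationary_chain_array (law_cols pi P).
Proof.
move=> n; split; [exact: law_cols_ge0 | exact: sum_law_cols |
  exact: sum_law_cols_xlnx | exact: law_cols_marginal].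
Qed.

Lemma law_rows_chain_array : stationary_chain_array (law_rows pi P).
Proof.
have sum_trmx n (F : 'M[T]_n.+1 -> R) : \sum_x F x^T = \sum_x F x.
  by rewrite [RHS](reindex_inj (@trmx_inj _ _ _)).
move=> n; split.
- by move=> x; rewrite law_rowsE law_cols_ge0.
- under eq_bigr do rewrite law_rowsE.
  by rewrite (sum_trmx _ (fun x => law_cols pi P x)) sum_law_cols.
- under eq_bigr do rewrite law_rowsE.
  rewrite (sum_trmx _ (fun x => law_cols pi P x * ln (law_cols pi P x))).
  exact: sum_law_cols_xlnx.
- move=> i j f; under eq_bigr do rewrite law_rowsE.
  rewrite -(law_cols_marginal j i f) -(sum_trmx _ (fun x => law_cols pi P x * f (x j i))).
  by apply: eq_bigr => x _; rewrite mxE.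
Qed.

End ArrayLaws.

Section Losses.
Variables (R : realType) (T : finType).

Lemma flat_inj m : injective (@flat T m).
Proof.
move=> x y e; apply/matrixP => i j.
set ij := [seq (i, j) | i <- enum 'I_m, j <- enum 'I_m].
have /eq_in_map ex : [seq x p.1 p.2 | p <- ij] = [seq y p.1 p.2 | p <- ij].
  by rewrite !map_allpairs.
by apply: (ex (i, j)); apply/allpairsP; exists (i, j); rewrite !mem_enum.
Qed.

Lemma pmf_count_le1 (I : choiceType) (p : I -> R) :
  is_pmf_count p -> forall s, p s <= 1.
Proof.
move=> [p0 p1] s; rewrite -lee_fin -p1.
apply: esum_ge; exists [set s]; first by split => //; exact: finite_set1.
by rewrite fsbig_set1.
Qed.

Lemma sum_flat_le1 m (Q : seq T -> R) (A : pred 'M[T]_m) : seq_model Q ->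
  \sum_(x in A) Q (flat x) <= 1.
Proof.
move=> [Q0 Q1]; rewrite -lee_fin -Q1 -sumEFin.
apply: esum_ge; exists [set` [seq flat x | x <- enum A]].
  by split => //; exact: finite_seq.
rewrite -fsbig_seq ?big_map ?big_enum //.
by rewrite map_inj_uniq ?enum_uniq //; exact: flat_inj.
Qed.

Lemma neglog_ge0 (q : R) : q <= 1 -> (0 <= neglog q)%E.
Proof.
by move=> q1; rewrite /neglog; case: ifP => // _; rewrite lee_fin oppr_ge0 ln_le0.
Qed.

Lemma loss_pinfty (law : forall m, 'M[T]_m -> R) m (Q : seq T -> R) (x : 'M[T]_m) :
  (0 < m)%N -> (forall s, Q s <= 1) -> (forall x, 0 <= law m x) ->
  0 < law m x -> ~~ (0 < Q (flat x)) -> loss law m Q = +oo%E.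
Proof.
move=> m0 Q1 law_ge0 lx Qx.
rewrite /loss (bigD1 x) //= {1}/neglog (negbTE Qx) gt0_muley ?lte_fin //.
have rest_ge0 : (0 <= \sum_(y | (0 < law m y)%R && (y != x))
                      (law m y)%:E * neglog (Q (flat y)))%E.
  by apply: sume_ge0 => y _; apply: mule_ge0; rewrite ?lee_fin ?neglog_ge0.
rewrite addye; last by rewrite gt_eqF // (lt_le_trans _ rest_ge0) // ltNy0.
by rewrite gt0_muley // lte_fin invr_gt0 ltr0n expn_gt0 m0.
Qed.

Lemma size_flat m (x : 'M[T]_m) : size (flat x) = (m * m)%N.
Proof. by rewrite size_allpairs size_enum_ord. Qed.

Section FixedLaw.
Variable n : nat.
Local Notation m := n.+1.

Lemma loss_ge_entropy (law : forall m, 'M[T]_m -> R) Q :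
  (forall x, 0 <= law m x) -> \sum_x law m x = 1 -> seq_model Q ->
  (((m ^ 2)%N%:R^-1 * - \sum_x law m x * ln (law m x))%:E <= loss law m Q)%E.
Proof.
move=> law_ge0 law_sum1 hQ; have Q1 := pmf_count_le1 hQ.
have [Qx|] := boolP [forall x, (0 < law m x) ==> (0 < Q (flat x))]; last first.
  move=> /forallPn [x]; rewrite negb_imply => /andP [lx Qx].
  by rewrite (loss_pinfty _ Q1 law_ge0 lx Qx) // leey.
rewrite /loss (eq_bigr (fun x => (law m x * - ln (Q (flat x)))%:E)); last first.
  by move=> x lx; rewrite /neglog (implyP (forallP Qx x) lx) EFinM.
rewrite sumEFin -EFinM lee_fin ler_wpM2l ?invr_ge0 ?ler0n //.
rewrite (sum_support (fun x => - ln (Q (flat x))) law_ge0); apply: gibbs => //.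
  exact: (sum_flat_le1 [pred x | 0 < law m x] hQ).
by move=> x /(implyP (forallP Qx x)).
Qed.

(* The law of [flat X]: the optimal model. *)
Definition flat_law (law : forall m, 'M[T]_m -> R) (s : seq T) : R :=
  \sum_(x | flat x == s) law m x.

Lemma flat_law_flat (law : forall m, 'M[T]_m -> R) x :
  flat_law law (flat x) = law m x.
Proof. by rewrite /flat_law (big_pred1 x) // => y; rewrite /= (inj_eq (@flat_inj m)). Qed.

Lemma flat_law_model (law : forall m, 'M[T]_m -> R) :
  (forall x, 0 <= law m x) -> \sum_x law m x = 1 -> seq_model (flat_law law).
Proof.
move=> law_ge0 law_sum1.
have flat_law_ge0 s : 0 <= flat_law law s by apply: sumr_ge0.
split=> //.
set S := [set` [seq flat x | x <- enum 'M[T]_m]].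
rewrite (esumID S) => [|s _]; last by rewrite lee_fin.
rewrite [X in (_ + X)%E]esum1 ?adde0 => [|s [_ /= Ss]]; last first.
  rewrite /flat_law big_pred0 // => x; apply/negbTE/eqP => e; apply: Ss.
  by rewrite -e; apply/mapP; exists x; rewrite ?mem_enum.
rewrite setTI esum_fset => [||s _]; [|exact: finite_seq|by rewrite lee_fin].
rewrite -fsbig_seq; last by rewrite map_inj_uniq ?enum_uniq //; exact: flat_inj.
rewrite big_map big_enum /= sumEFin.
by under eq_bigr do rewrite flat_law_flat; rewrite law_sum1.
Qed.

Lemma min_loss_seq_model (law : forall m, 'M[T]_m -> R) :
  (forall x, 0 <= law m x) -> \sum_x law m x = 1 ->
  min_loss law (@seq_model R T) m =
  ((m ^ 2)%N%:R^-1 * - \sum_x law m x * ln (law m x))%:E.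
Proof.
move=> law_ge0 law_sum1; apply/eqP; rewrite eq_le; apply/andP; split; last first.
  by apply: le_ereal_inf_tmp => _ [Q hQ <-]; exact: loss_ge_entropy.
apply: ereal_inf_lbound; exists (flat_law law); first exact: flat_law_model.
rewrite /loss; under eq_bigr => x lx do rewrite flat_law_flat /neglog lx -EFinM.
rewrite sumEFin -EFinM (sum_support (fun x => - ln (law m x)) law_ge0) -sumrN.
by under eq_bigr do rewrite mulrN.
Qed.

Lemma sum_law_sum_flat (law : forall m, 'M[T]_m -> R) (pi g : T -> R) :
  (forall i j (f : T -> R), \sum_x law m x * f (x i j) = \sum_a pi a * f a) ->
  \sum_x law m x * \sum_(r <- flat x) g r = (m * m)%:R * \sum_a pi a * g a.
Proof.
move=> law_marg.
have law_flat x : law m x * \sum_(r <- flat x) g r = \sum_i \sum_j law m x * g (x i j).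
  rewrite /flat big_allpairs_dep /= big_distrr /= big_enum.
  by apply: eq_bigr => i _; rewrite big_distrr /= big_enum.
under eq_bigr do rewrite law_flat.
rewrite exchange_big /=.
under eq_bigr => i _ do
  (rewrite exchange_big /=; under eq_bigr => j _ do rewrite law_marg).
by rewrite !sumr_const !card_ord -mulrnA mulr_natl.
Qed.

Lemma neglog_unigram_ge (Qn : nat -> R) (Qt : T -> R) (s : seq T) :
  Qn (size s) <= 1 -> 0 < Qn (size s) -> (forall a, 0 < Qt a) ->
  \sum_(r <- s) - ln (Qt r) <= - ln (unigram Qn Qt s).
Proof.
move=> Qn1 Qn0 Qt0; rewrite /unigram lnM ?posrE ?prodr_gt0 // ln_prod // opprD sumrN.
by rewrite lerDr oppr_ge0 ln_le0.
Qed.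

Lemma unigram_le1 (Qn : nat -> R) (Qt : T -> R) s :
  is_pmf_count Qn -> is_pmf Qt -> unigram Qn Qt s <= 1.
Proof.
move=> hQn [Qt_ge0 Qt_sum1].
have Qt_le1 a : Qt a <= 1 by rewrite -Qt_sum1 (bigD1 a) //= lerDl sumr_ge0.
rewrite mulr_ile1 ?prodr_ge0 ?prodr_ile1 ?hQn.1 ?(pmf_count_le1 hQn) //.
by move=> r _; rewrite Qt_ge0 Qt_le1.
Qed.

Lemma exists_law_gt0_entry (law : forall m, 'M[T]_m -> R) (pi : T -> R) a :
  (forall x, 0 <= law m x) ->
  (forall i j (f : T -> R), \sum_x law m x * f (x i j) = \sum_a pi a * f a) ->
  0 < pi a -> exists2 x : 'M[T]_m, x ord0 ord0 = a & 0 < law m x.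
Proof.
move=> law_ge0 law_marg pia.
have [x /andP[/eqP xa lx]] : exists x : 'M[T]_m, (x ord0 ord0 == a) && (0 < law m x).
  apply: psumr_neq0P => [x _|]; first exact: law_ge0.
  apply/eqP; rewrite big_mkcond /=.
  rewrite (eq_bigr (fun x => law m x * (x ord0 ord0 == a)%:R)) => [|x _]; last first.
    by case: eqP; rewrite ?mulr1 ?mulr0.
  rewrite (law_marg ord0 ord0 (fun b => (b == a)%:R)) (bigD1 a) //= eqxx mulr1.
  by rewrite big1 ?addr0 ?gt_eqF // => b /negbTE ->; rewrite mulr0.
by exists x.
Qed.

(* Every entry of the array is pi-distributed, so by Gibbs' inequality each
   token costs at least H(pi) under a unigram model. *)
Lemma entropy_le_loss_pos_unigram (law : forall m, 'M[T]_m -> R) (pi : T -> R) Qn Qt :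
  (forall x, 0 <= law m x) ->
  (forall i j (f : T -> R), \sum_x law m x * f (x i j) = \sum_a pi a * f a) ->
  is_pmf pi -> (forall a, 0 < pi a) -> is_pmf_count Qn -> is_pmf Qt ->
  0 < Qn (m * m)%N -> (forall a, 0 < Qt a) ->
  ((entropy pi)%:E <= loss law m (unigram Qn Qt))%E.
Proof.
move=> law_ge0 law_marg hpi pi_gt0 hQn hQt Qn_gt0 Qt_gt0.
have unigram_gt0 (x : 'M[T]_m) : 0 < unigram Qn Qt (flat x).
  by rewrite /unigram size_flat mulr_gt0 // prodr_gt0.
pose cost (x : 'M[T]_m) := - ln (unigram Qn Qt (flat x)).
rewrite /loss (eq_bigr (fun x => (law m x * cost x)%:E)); last first.
  by move=> x _; rewrite /neglog unigram_gt0 EFinM.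
rewrite sumEFin -EFinM lee_fin (sum_support cost law_ge0).
set c := ((m ^ 2)%N%:R)^-1 : R.
pose token_cost r := - ln (Qt r).
apply: le_trans (_ : c * \sum_x law m x * \sum_(r <- flat x) token_cost r <= _);
  last first.
  rewrite ler_wpM2l ?invr_ge0 ?ler0n //; apply: ler_sum => x _.
  rewrite ler_wpM2l //; apply: neglog_unigram_ge; rewrite ?size_flat //.
  exact: pmf_count_le1.
rewrite (sum_law_sum_flat _ law_marg) mulnn mulrA mulVf ?mul1r ?pnatr_eq0 ?expn_eq0 //.
rewrite (entropyE hpi.1); apply: gibbs => //; first exact: hpi.1; first exact: hpi.2.
by rewrite (eq_bigl predT) ?hQt.2 // => a; rewrite /= pi_gt0.
Qed.

Lemma loss_unigram_ge (law : forall m, 'M[T]_m -> R) (pi : T -> R) Q :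
  (forall x, 0 <= law m x) -> \sum_x law m x = 1 ->
  (forall i j (f : T -> R), \sum_x law m x * f (x i j) = \sum_a pi a * f a) ->
  is_pmf pi -> (forall a, 0 < pi a) -> unigram_class Q ->
  ((entropy pi)%:E <= loss law m Q)%E.
Proof.
move=> law_ge0 law_sum1 law_marg hpi pi_gt0 [Qn [Qt [hQn hQt ->]]].
have Q_le1 s := unigram_le1 s hQn hQt.
have [/existsP[a Qta]|/existsPn Qt_gt0] := boolP [exists a, ~~ (0 < Qt a)].
  have [x xa lx] := exists_law_gt0_entry law_ge0 law_marg (pi_gt0 a).
  rewrite (loss_pinfty _ Q_le1 law_ge0 lx) ?leey //.
  have a_flat : a \in flat x by apply/allpairsP; exists (ord0, ord0); rewrite !mem_enum xa.
  have Qta0 : Qt a = 0 by apply/eqP; rewrite eq_le hQt.1 andbT leNgt.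
  by rewrite /unigram (big_rem a) //= Qta0 mul0r mulr0 ltxx.
have [Qn_gt0|Qn_le0] := boolP (0 < Qn (m * m)%N).
  apply: entropy_le_loss_pos_unigram => // a.
  by have := Qt_gt0 a; rewrite negbK.
have [x /andP[_ lx]] : exists x : 'M[T]_m, true && (0 < law m x).
  by apply: psumr_neq0P => [x _|]; rewrite ?law_sum1 ?oner_neq0 //; apply/eqP.
rewrite (loss_pinfty _ Q_le1 law_ge0 lx) ?leey //.
have Qn0 : Qn (m * m)%N = 0 by apply/eqP; rewrite eq_le hQn.1 andbT leNgt.
by rewrite /unigram size_flat Qn0 mul0r ltxx.
Qed.

End FixedLaw.
End Losses.

Section Irreducible.
Variables (R : realType) (T : finType) (P : T -> T -> R) (pi : T -> R).
Hypotheses (hP : is_kernel P) (hpi : stationary P pi).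

Lemma nstep_ge0 n a b : 0 <= nstep P n a b.
Proof.
elim: n a b => [|n IH] a b /=; first by case: eqP.
by apply: sumr_ge0 => c _; rewrite mulr_ge0 ?IH ?hP.1.
Qed.

Lemma sum_nstep_stationary n b : \sum_a pi a * nstep P n a b = pi b.
Proof.
elim: n b => [|n IH] b /=.
  rewrite (bigD1 b) //= eqxx mulr1 big1 ?addr0 // => a /negbTE ->; exact: mulr0.
under eq_bigr do rewrite big_distrr /=.
rewrite exchange_big /= -hpi.2; apply: eq_bigr => c _.
by under eq_bigr do rewrite mulrA; rewrite -big_distrl /= IH.
Qed.

Lemma irreducible_stationary_gt0 : irreducible P -> forall b, 0 < pi b.
Proof.
move=> P_irr b.
have [a /andP[_ pia]] : exists a, true && (0 < pi a).
  by apply: psumr_neq0P => [a _|]; rewrite ?hpi.1.1 ?hpi.1.2 ?oner_neq0 //; apply/eqP.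
have [n Pn] := P_irr a b.
rewrite -(sum_nstep_stationary n b) (bigD1 a) //=.
rewrite ltr_pwDl ?mulr_gt0 // sumr_ge0 // => c _.
by rewrite mulr_ge0 ?nstep_ge0 ?hpi.1.1.
Qed.

End Irreducible.

Lemma limn_einf_ge (R : realType) (u : (\bar R)^nat) (c : \bar R) :
  (forall n, c <= u n.+1)%E -> (c <= limn_einf u)%E.
Proof.
move=> uc; rewrite limn_einf_lim; apply: lime_ge; first exact: is_cvg_einfs.
near=> k.
have k_gt0 : (0 < k)%N by near: k; exists 1%N.
apply: le_ereal_inf_tmp => _ [[|j] /= kj <-]; last exact: uc.
by move: (leq_trans k_gt0 kj).
Unshelve. all: by end_near.
Qed.

Section ChainArrayLosses.
Variables (R : realType) (T : finType) (P : T -> T -> R) (pi : T -> R).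

Lemma min_loss_unigram_ge (law : forall m, 'M[T]_m -> R) n :
  is_pmf pi -> (forall a, 0 < pi a) -> stationary_chain_array P pi law ->
  ((entropy pi)%:E <= min_loss law (@unigram_class R T) n.+1)%E.
Proof.
move=> hpi pi_gt0 law_chain; have [law_ge0 law_sum1 _ law_marg] := law_chain n.
by apply: le_ereal_inf_tmp => _ [Q hQ <-]; exact: loss_unigram_ge.
Qed.

Lemma min_loss_seq_model_harmonic (law : forall m, 'M[T]_m -> R) n :
  stationary_chain_array P pi law ->
  min_loss law (@seq_model R T) n.+1 =
  (entropy_rate pi P + (entropy pi - entropy_rate pi P) * harmonic n)%:E.
Proof.
move=> law_chain; have [law_ge0 law_sum1 law_xlnx _] := law_chain n.
rewrite min_loss_seq_model // law_xlnx opprK /harmonic /= natrX.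
by congr EFin; field; rewrite addrC natr1 pnatr_eq0.
Qed.

End ChainArrayLosses.

Theorem proposition1 (R : realType) (T : finType) (P : T -> T -> R)
  (pi : T -> R) (hP : ergodic P) (hpi : stationary P pi)
  (law : forall m, 'M[T]_m -> R)
  (hlaw : law = law_cols pi P \/ law = law_rows pi P) :
  (limn_einf (fun m => min_loss law (@unigram_class R T) m)
     >= (entropy pi)%:E)%E /\
  ((fun m => min_loss law (@seq_model R T) m) @ \oo
     --> (entropy_rate pi P)%:E).
Proof.
have [P_kernel [P_irr _]] := hP.
have law_chain : stationary_chain_array P pi law.
  by case: hlaw => ->; [exact: law_cols_chain_array | exact: law_rows_chain_array].
split.
  apply: limn_einf_ge => n; apply: min_loss_unigram_ge => //; first exact: hpi.1.
  exact: irreducible_stationary_gt0 P_kernel hpi P_irr.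
rewrite -cvg_shiftS /=.
under eq_fun do rewrite (min_loss_seq_model_harmonic _ law_chain).
apply: cvg_EFin; first exact: nearW.
set h := entropy_rate pi P; set d := entropy pi - h.
rewrite -[X in _ --> X]addr0 -(mulr0 d).
apply: cvgD; first exact: cvg_cst.
by apply: cvgM; [exact: cvg_cst | exact: cvg_harmonic].
Qed.
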